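(* Let $\sigma$ be the morphism on the four-letter alphabet $\{1,1^*,2,2^*\}$ given by $1\to 2$, $1^*\to 2^*$, $2\to 1^*2^*$, $2^*\to 21$. Then $\sigma^3(2^* )$ begins with $2^*$, and the infinite sequence $\mathbf u=\lim_{n\to\infty}\sigma^{3n}(2^* )$ is not $q$-automatic for any $q\ge 2$. More precisely, $\mathbf u$ is a concatenation of the blocks $A=2^*2$ and $B=11^*$, and the resulting sequence over $\{A,B\}$ is the fixed point of the morphism $A\to ABABA$, $B\to ABA$, which is a Sturmian sequence.
   Context: A Sturmian sequence is an infinite sequence over a two-letter alphabet having exactly $n+1$ distinct factors of length $n$ for every $n\ge0$. For an integer $q\ge 2$, a sequence is $q$-automatic if it is the image under a letter-to-letter map of a fixed point of a morphism all of whose letter-images have length $q$. *)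

From HB Require Import structures.
From mathcomp Require Import all_boot.

Set Implicit Arguments.
Unset Strict Implicit.
Unset Printing Implicit Defensive.

Inductive letter := L1 | L1s | L2 | L2s.

Definition letter_to_nat (x : letter) : nat :=
  match x with L1 => 0 | L1s => 1 | L2 => 2 | L2s => 3 end.
Definition nat_to_letter (n : nat) : option letter :=
  match n with 0 => Some L1 | 1 => Some L1s | 2 => Some L2 | 3 => Some L2s | _ => None end.
Lemma letter_natK : pcancel letter_to_nat nat_to_letter. Proof. by case. Qed.
HB.instance Definition _ := Equality.copy letter (pcan_type letter_natK).

Inductive AB := A | B.
Definition AB_to_bool (x : AB) : bool := if x is A then true else false.
Definition bool_to_AB (b : bool) : AB := if b then A else B.
Lemma AB_boolK : cancel AB_to_bool bool_to_AB. Proof. by case. Qed.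
HB.instance Definition _ := Equality.copy AB (can_type AB_boolK).

Definition morph_word (T U : Type) (phi : T -> seq U) (w : seq T) : seq U :=
  flatten (map phi w).

Definition prefix_of (T : Type) (s : seq T) (u : nat -> T) : Prop :=
  s = mkseq u (size s).

(** [u] is a fixed point of the morphism [phi]: phi(u) = u, i.e. the image of
    every finite prefix of [u] is a prefix of [u]. *)
Definition fixed_point (T : Type) (phi : T -> seq T) (u : nat -> T) : Prop :=
  forall n, prefix_of (morph_word phi (mkseq u n)) u.

Definition sigma (x : letter) : seq letter :=
  match x with
  | L1 => [:: L2]
  | L1s => [:: L2s]
  | L2 => [:: L1s; L2s]
  | L2s => [:: L2; L1]
  end.

Definition limit_of (T : Type) (w : nat -> seq T) (u : nat -> T) : Prop :=
  (forall n, prefix_of (w n) u) /\ (forall m, exists n, m <= size (w n)).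

Definition sigma3n_2s (n : nat) : seq letter := iter (3 * n) (morph_word sigma) [:: L2s].

Definition automatic (T : Type) (q : nat) (u : nat -> T) : Prop :=
  exists (C : finType) (phi : C -> seq C) (h : C -> T) (w : nat -> C),
    (forall c, size (phi c) = q) /\ fixed_point phi w /\ (forall n, u n = h (w n)).

Definition factor (T : Type) (u : nat -> T) (i n : nat) : seq T :=
  mkseq (fun j => u (i + j)) n.

Definition sturmian (u : nat -> AB) : Prop :=
  forall n, exists s : seq (seq AB),
    uniq s /\ size s = n.+1 /\
    (forall w, w \in s <-> exists i, w = factor u i n).

Definition block (x : AB) : seq letter :=
  match x with A => [:: L2s; L2] | B => [:: L1; L1s] end.

Definition block_concat (u : nat -> letter) (v : nat -> AB) : Prop :=
  forall n, prefix_of (morph_word block (mkseq v n)) u.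

Definition tau (x : AB) : seq AB :=
  match x with A => [:: A; B; A; B; A] | B => [:: A; B; A] end.

(* Let beta = (sqrt 5 - 1) / 2 and let F n be the integer nearest to n beta.
   The characteristic word v, with v n = A exactly when F jumps at n, is the
   fixed point of tau : A -> ABABA, B -> ABA: the identity beta^2 = 1 - beta
   determines F just after 3n + 2 F n from F n.  Since sigma^3 acts on the
   blocks A = 2s 2 and B = 1 1s as tau does on letters, every sigma^(3n)(2s)
   is a prefix of the block coding ub of v, which is therefore the limit u.
   The word v is balanced (F is within 1/2 of a linear function) and not
   eventually periodic (beta is irrational), hence Sturmian by the classical
   count of right special factors.  Finally, the prefix of length L of u
   contains L beta / 2 + O(1) letters 2s, whereas in a q-automatic sequence a
   letter class with bounded discrepancy has a rational frequency: counts in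
   blocks of length q^k satisfy a linear recurrence whose forcing term takes
   finitely many values and hence becomes periodic. *)

From Stdlib Require Import Reals Lra Psatz Classical ClassicalEpsilon.
From mathcomp Require Import all_boot zify.

Set Implicit Arguments.
Unset Strict Implicit.
Unset Printing Implicit Defensive.

Lemma morph_word_cat (T U : Type) (phi : T -> seq U) s1 s2 :
  morph_word phi (s1 ++ s2) = morph_word phi s1 ++ morph_word phi s2.
Proof. by rewrite /morph_word map_cat flatten_cat. Qed.

Lemma morph_word_rcons (T U : Type) (phi : T -> seq U) s x :
  morph_word phi (rcons s x) = morph_word phi s ++ phi x.
Proof. by rewrite /morph_word map_rcons flatten_rcons. Qed.

Lemma iter_morph_word_cat (T : Type) (phi : T -> seq T) k s1 s2 :
  iter k (morph_word phi) (s1 ++ s2) =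
  iter k (morph_word phi) s1 ++ iter k (morph_word phi) s2.
Proof. by elim: k => //= k ->; rewrite morph_word_cat. Qed.

Lemma mkseq_add (T : Type) (f : nat -> T) a b :
  mkseq f (a + b) = mkseq f a ++ factor f a b.
Proof.
by rewrite /factor /mkseq iotaD map_cat add0n -(addn0 a) iotaDl -map_comp addn0.
Qed.

Lemma factor_rcons (T : Type) (f : nat -> T) i n :
  factor f i n.+1 = rcons (factor f i n) (f (i + n)).
Proof. by rewrite /factor mkseqS. Qed.

Lemma factor_cons (T : Type) (f : nat -> T) i n :
  factor f i n.+1 = f i :: factor f i.+1 n.
Proof.
rewrite /factor /mkseq /= addn0 (iotaDl 1 0) -map_comp; congr (_ :: _).
by apply: eq_map => j /=; rewrite addnA addn1.
Qed.

Lemma prefix_of_cat (T : Type) (s t : seq T) (u : nat -> T) :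
  prefix_of (s ++ t) u -> prefix_of s u.
Proof.
rewrite /prefix_of size_cat mkseq_add => /(congr1 (take (size s))).
by rewrite !take_size_cat ?size_mkseq.
Qed.

Lemma limit_unique (T : Type) (w : nat -> seq T) u1 u2 :
  limit_of w u1 -> limit_of w u2 -> u1 =1 u2.
Proof.
move=> [pre1 long] [pre2 _] i; have [n hn] := long i.+1.
have e1 := congr1 (nth (u1 i) ^~ i) (pre1 n).
have e2 := congr1 (nth (u1 i) ^~ i) (pre2 n).
by rewrite /= !nth_mkseq // in e1 e2; rewrite -e1 e2.
Qed.

Lemma pigeonhole (T : eqType) (L : seq T) (f : nat -> T) :
  (forall k, f k \in L) -> exists i j, (i < j)%N /\ f i = f j.
Proof.
move=> hf; set s := map f (iota 0 (size L).+1).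
have : ~~ uniq s.
  apply/negP => us; have hsub : {subset s <= L} by move=> x /mapP [k _ ->].
  by have := uniq_leq_size us hsub; rewrite size_map size_iota ltnn.
case/(uniqPn (f 0)) => i [j [hij hj e]]; exists i, j; split => //.
move: e; rewrite size_map size_iota in hj.
by rewrite !(nth_map 0) ?size_iota ?(ltn_trans hij) // !nth_iota ?(ltn_trans hij).
Qed.

Lemma no_square_eq_5_square x y : (0 < y)%N -> x * x <> 5 * (y * y).
Proof.
move=> y_gt0 E.
have x_gt0 : (0 < x)%N.
  case: x E => [|x] E //; have : (0 < 5 * (y * y))%N by rewrite !muln_gt0 y_gt0.
  by rewrite -E.
have logn55 : logn 5 5 = 1 by [].
have := congr1 (logn 5) E.
by rewrite lognM // lognM ?muln_gt0 ?y_gt0 // lognM // logn55; lia.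
Qed.

Section Golden.
Local Open Scope R_scope.

(* Bridges between the ssreflect operations on [nat] and the reals: the
   Stdlib lemmas are stated for [Nat.add], [Nat.mul] and [lt]. *)
Lemma INR_add m n : INR (m + n)%N = INR m + INR n.
Proof. exact: plus_INR. Qed.

Lemma INR_mul m n : INR (m * n)%N = INR m * INR n.
Proof. exact: mult_INR. Qed.

Lemma INR_exp m n : INR (m ^ n)%N = INR m ^ n.
Proof. by elim: n => // n IH; rewrite expnS INR_mul IH. Qed.

Lemma INR_two : INR 2 = 2.
Proof. by rewrite S_INR INR_1; lra. Qed.

Lemma INR_sub m n : (n <= m)%N -> INR (m - n)%N = INR m - INR n.
Proof. by move/leP; apply: minus_INR. Qed.

Lemma INR_ltn m n : (m < n)%N -> INR m < INR n.
Proof. by move/ltP; apply: lt_INR. Qed.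

Lemma ltn_INR m n : INR m < INR n -> (m < n)%N.
Proof. by move/INR_lt/ltP. Qed.

Lemma INR_leq m n : (m <= n)%N -> INR m <= INR n.
Proof. by move/leP; apply: le_INR. Qed.

Lemma leq_INR m n : INR m <= INR n -> (m <= n)%N.
Proof. by move/INR_le/leP. Qed.

Definition s5 : R := sqrt 5.

Lemma s5_sq : s5 * s5 = 5.
Proof. by rewrite /s5 sqrt_sqrt //; lra. Qed.

Lemma s5_pos : 0 < s5.
Proof. by apply: sqrt_lt_R0; lra. Qed.

Lemma s5_bounds : 2236 / 1000 < s5 < 2237 / 1000.
Proof. have := s5_sq; have := s5_pos; split; nra. Qed.

(* [sqrt 5] is irrational; the form [y sqrt 5 + c <> d] avoids negative numbers. *)
Lemma s5_irrational y c d : (0 < y)%N -> INR y * s5 + INR c <> INR d.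
Proof.
move=> y_gt0 E.
have c_le_d : (c <= d)%N.
  apply: leq_INR; rewrite -E; have := pos_INR y; have := s5_pos; nra.
apply: (@no_square_eq_5_square (d - c) y y_gt0); apply: INR_eq.
rewrite !INR_mul INR_sub //.
have -> : INR 5 = 5 by simpl; lra.
have := s5_sq; nra.
Qed.

Definition beta : R := (s5 - 1) / 2.

Lemma beta_bounds : 618 / 1000 < beta < 6185 / 10000.
Proof. by have := s5_bounds; rewrite /beta; lra. Qed.

Lemma beta_sq : beta * beta = 1 - beta.
Proof. by have := s5_sq; rewrite /beta; nra. Qed.

(* [x] is a quotient of integers, written as a difference of naturals. *)
Definition rational (x : R) : Prop :=
  exists a b y, (0 < y)%N /\ INR y * x = INR a - INR b.

Lemma beta_irrational : ~ rational beta.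
Proof.
move=> [a [b [y [y_gt0 E]]]]; apply: (@s5_irrational y (2 * b) (2 * a + y) y_gt0).
by rewrite INR_add !INR_mul INR_two; move: E; rewrite /beta; lra.
Qed.

Lemma half_beta_irrational : ~ rational (beta / 2).
Proof.
move=> [a [b [y [y_gt0 E]]]]; apply: beta_irrational.
by exists (2 * a)%N, (2 * b)%N, y; split => //; rewrite !INR_mul INR_two; lra.
Qed.

Lemma bounded_multiples_zero x b : (forall m, Rabs (INR m * x) < b) -> x = 0.
Proof.
move=> bounded; apply: NNPP => x_neq0.
have [m hm] := INR_archimed (Rabs x) b (Rabs_pos_lt x x_neq0).
by have := bounded m; rewrite Rabs_mult Rabs_pos_eq; [lra | apply: pos_INR].
Qed.

End Golden.

(** [F n] is the integer nearest to [n * beta], computed exactly from the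
    integer square root of [5 n^2]. *)

Definition F (n : nat) : nat := ((Nat.sqrt (5 * n * n) + 1 - n) %/ 2)%N.

Section NearestInteger.
Local Open Scope R_scope.

(* [Nat.sqrt (5 n^2)] is the integer part of [n * sqrt 5], which is never an
   integer for [n > 0]. *)
Lemma sqrt_5nn_bounds n : (0 < n)%N ->
  let r := Nat.sqrt (5 * n * n) in INR r < INR n * s5 < INR r + 1.
Proof.
move=> n_gt0 r.
have [r_le r_gt] := Nat.sqrt_spec (5 * n * n) (Nat.le_0_l _).
have {}r_le : (r * r < 5 * (n * n))%N.
  rewrite ltn_neqAle mulnA; apply/andP; split; last exact/leP.
  by apply/eqP => E; apply: (@no_square_eq_5_square r n n_gt0); rewrite E mulnA.
have {}r_gt : (5 * n * n < r.+1 * r.+1)%N by apply/ltP.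
have := INR_ltn r_le; have := INR_ltn r_gt.
have INR5 : INR 5 = 5 by simpl; lra.
rewrite !INR_mul (S_INR r) INR5 => sq_hi sq_lo.
have := s5_sq; have := s5_pos; have := pos_INR r; have := pos_INR n => *.
have : 0 <= INR n * s5 by nra.
by split; nra.
Qed.

Lemma F_bounds n : INR (F n) - 1/2 < INR n * beta < INR (F n) + 1/2.
Proof.
case: (posnP n) => [->|n_gt0]; first by rewrite /F /=; lra.
have [lo hi] := sqrt_5nn_bounds n_gt0.
set r := Nat.sqrt (5 * n * n) in lo hi.
have b := s5_bounds.
have n_lt_r : (2 * n < r + 1)%N.
  apply: ltn_INR; rewrite INR_mul !INR_add INR_two INR_1; have := pos_INR n; nra.
have F_lo : (2 * F n + n <= r + 1)%N.
  by rewrite /F; have := leq_divM (r + 1 - n) 2; rewrite mulnC; lia.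
have F_hi : (r <= 2 * F n + n)%N.
  by rewrite /F; have := ltn_ceil (r + 1 - n) (isT : (0 < 2)%N); rewrite mulnC; lia.
move: (INR_leq F_lo) (INR_leq F_hi); rewrite mul2n -addnn !INR_add INR_1 /beta.
split; lra.
Qed.

Lemma F_unique n k : INR k - 1/2 < INR n * beta < INR k + 1/2 -> F n = k.
Proof.
move=> [lo hi]; have [F_lo F_hi] := F_bounds n.
apply/eqP; rewrite eqn_leq; apply/andP.
by split; rewrite -ltnS; apply: ltn_INR; rewrite -addn1 INR_add INR_1; lra.
Qed.

(* [F] grows by 0 or 1 at each step, since [beta < 1]. *)
Lemma F_step n : (F n <= F n.+1 <= (F n).+1)%N.
Proof.
have [f1 f2] := F_bounds n; have [g1 g2] := F_bounds n.+1.
have hb := beta_bounds; rewrite S_INR in g1 g2.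
by apply/andP; split; rewrite -ltnS; apply: ltn_INR; rewrite ?S_INR; nra.
Qed.

Lemma F_balanced i j n : (F (i + n) + F j <= F (j + n) + F i + 1)%N.
Proof.
rewrite -ltnS; apply: ltn_INR.
have [a1 a2] := F_bounds (i + n); have [b1 b2] := F_bounds j.
have [c1 c2] := F_bounds (j + n); have [d1 d2] := F_bounds i.
rewrite !INR_add in a1 a2 c1 c2; rewrite S_INR !INR_add INR_1; lra.
Qed.

(* Since [beta] is irrational, [F] is not affine along any progression. *)
Lemma F_not_affine a p c : (0 < p)%N -> ~ (forall m, F (a + m * p) = F a + m * c)%N.
Proof.
move=> p_gt0 affine.
have : INR c - INR p * beta = 0.
  apply: (@bounded_multiples_zero _ 1) => m.
  have [a1 a2] := F_bounds (a + m * p); have [b1 b2] := F_bounds a.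
  rewrite affine !INR_add !INR_mul in a1 a2.
  by apply: Rabs_def1; lra.
by move=> E; apply: beta_irrational; exists c, 0%N, p; split => //; rewrite INR_0; lra.
Qed.

End NearestInteger.

Definition v (n : nat) : AB := if F n.+1 == (F n).+1 then A else B.

Lemma F_succ n : F n.+1 = (F n + (v n == A))%N.
Proof.
have BA : (B == A) = false by [].
rewrite /v; have := F_step n.
by case: (eqVneq (F n.+1) (F n).+1) => [->|ne]; rewrite ?eqxx ?(negbTE ne) ?BA /=; lia.
Qed.

Lemma v_jump m : F m.+1 = (F m).+1 -> v m = A.
Proof. by rewrite /v => ->; rewrite eqxx. Qed.

Lemma v_flat m : F m.+1 = F m -> v m = B.
Proof. by rewrite /v => ->; rewrite ltn_eqF. Qed.

(* [ell n] is the length of [tau (v 0) ... tau (v (n-1))]. *)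
Definition ell (n : nat) : nat := (3 * n + 2 * F n)%N.

Lemma ell_succ n : ell n.+1 = (ell n + size (tau (v n)))%N.
Proof. by rewrite /ell F_succ; case: (v n) => /=; lia. Qed.

Section TauWindow.
Local Open Scope R_scope.

(* The identity [beta^2 = 1 - beta] pins down [F] just after [ell n]: with
   [K = 2n + F n], it takes the values K, K+1, K+1, K+2 and, when [v n = A],
   again K+2. *)
Lemma F_after_ell n : let l := ell n in let K := (2 * n + F n)%N in
  [/\ F l = K, F l.+1 = K.+1, F l.+2 = K.+1, F l.+3 = K.+2
    & v n = A -> F l.+4 = K.+2].
Proof.
move=> l K; have [f1 f2] := F_bounds n.
set E := INR n * beta - INR (F n).
have hb := beta_bounds; have hs := s5_bounds.
have at_shift j : INR (l + j) * beta = INR K + E * (1 - 2 * beta) + INR j * beta.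
  have n_beta_sq : INR n * (beta * beta) = INR n * (1 - beta) by rewrite beta_sq.
  by rewrite /l /K /E /ell !INR_add INR_0; lra.
have shift_small : 1/2 - beta < E * (1 - 2 * beta) < beta - 1/2.
  have e1 : - (1/2) < E < 1/2 by rewrite /E; lra.
  have e2 : 1 - 2 * beta < 0 by lra.
  by split; nra.
have F_at j k : INR k - 1/2 < INR K + E * (1 - 2 * beta) + INR j * beta < INR k + 1/2 ->
    F (l + j) = k.
  by move=> bounds; apply: F_unique; rewrite at_shift.
have INR3 : INR 3 = 3 by rewrite !S_INR INR_0; lra.
have INR4 : INR 4 = 4 by rewrite !S_INR INR_0; lra.
split.
- by rewrite -(addn0 l); apply: F_at; rewrite INR_0; lra.
- by rewrite -addn1; apply: F_at; rewrite -addn1 INR_add !INR_1; lra.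
- by rewrite -addn2; apply: F_at; rewrite -addn1 INR_add INR_1 INR_two; lra.
- by rewrite -addn3; apply: F_at; rewrite -addn2 INR_add INR_two INR3; lra.
move=> vA; have [g1 g2] := F_bounds n.+1.
rewrite F_succ vA addn1 !S_INR in g1.
have hE : E > 1/2 - beta by rewrite /E; lra.
have hw : E * (1 - 2 * beta) < (1/2 - beta) * (1 - 2 * beta) by nra.
rewrite -addn4; apply: F_at; rewrite -addn2 INR_add INR_two INR4; split; [lra|].
by have := s5_sq; rewrite /beta in hw *; nra.
Qed.

End TauWindow.

Lemma tau_window n : factor v (ell n) (size (tau (v n))) = tau (v n).
Proof.
have [F0 F1 F2 F3 F4] := F_after_ell n.
have [F5 _ _ _ _] := F_after_ell n.+1.
rewrite /factor /mkseq; case vn: (v n) => /=; rewrite !addnS addn0.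
- have e : ell n.+1 = (ell n).+4.+1 by rewrite ell_succ vn /=; lia.
  rewrite e (F_succ n) vn in F5; have {}F4 := F4 vn.
  rewrite (v_jump (_ : F _.+1 = (F _).+1)) ?F0 ?F1 //.
  rewrite (v_flat (_ : F _.+2 = F _.+1)) ?F1 ?F2 //.
  rewrite (v_jump (_ : F _.+3 = (F _).+1)) ?F2 ?F3 //.
  rewrite (v_flat (_ : F _.+4 = F _.+3)) ?F3 ?F4 //.
  by rewrite (v_jump (_ : F (ell n).+4.+1 = (F _).+1)) // F4 F5 eqxx /=; lia.
rewrite (v_jump (_ : F _.+1 = (F _).+1)) ?F0 ?F1 //.
rewrite (v_flat (_ : F _.+2 = F _.+1)) ?F1 ?F2 //.
by rewrite (v_jump (_ : F _.+3 = (F _).+1)) ?F2 ?F3.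
Qed.

Lemma tau_image_prefix n : morph_word tau (mkseq v n) = mkseq v (ell n).
Proof.
elim: n => [|n IH]; first by rewrite /ell /F.
by rewrite mkseqS morph_word_rcons IH ell_succ mkseq_add tau_window.
Qed.

Lemma v_fixed_point : fixed_point tau v.
Proof. by move=> n; rewrite /prefix_of tau_image_prefix size_mkseq. Qed.

(** The concatenation [ub] of the blocks [block (v 0) block (v 1) ...] is the
    limit of [sigma^(3n)(2s)]. *)

Definition ub (i : nat) : letter := nth L1 (block (v i./2)) (odd i).

Lemma block_image_prefix m : morph_word block (mkseq v m) = mkseq ub (2 * m).
Proof.
elim: m => // m IH.
rewrite mkseqS morph_word_rcons IH mulnS addnC mkseq_add; congr (_ ++ _).
rewrite /factor /mkseq /= /ub addn0 addn1 mul2n /= odd_double doubleK uphalf_double.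
by case: (v m).
Qed.

Lemma sigma3_block w :
  iter 3 (morph_word sigma) (morph_word block w) = morph_word block (morph_word tau w).
Proof.
elim: w => // x w IH.
by rewrite -cat1s !morph_word_cat iter_morph_word_cat IH; case: x.
Qed.

Lemma sigma3n_block n :
  iter (3 * n) (morph_word sigma) (morph_word block [:: A]) =
  morph_word block (iter n (morph_word tau) [:: A]).
Proof. by elim: n => // n IH; rewrite mulnS iterD IH sigma3_block. Qed.

(* The words [tau^n(A)] are prefixes of [v], starting from [v 0 = A]. *)
Lemma tau_iter_prefix n : exists m, iter n (morph_word tau) [:: A] = mkseq v m.
Proof.
elim: n => [|n [m IH]]; first by exists 1%N; rewrite /mkseq /= /v /F; vm_compute.
by exists (ell m); rewrite iterS IH tau_image_prefix.
Qed.

(* [sigma^(3n)(2s 2) = block (tau^n(A))] is a prefix of [ub], hence so is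
   [sigma^(3n)(2s)]. *)
Lemma sigma3n_2s_prefix n : prefix_of (sigma3n_2s n) ub.
Proof.
have [m tau_n] := tau_iter_prefix n.
have := sigma3n_block n; rewrite tau_n block_image_prefix.
rewrite (_ : morph_word block [:: A] = [:: L2s] ++ [:: L2]) // iter_morph_word_cat.
by move=> E; apply: (@prefix_of_cat _ _ (iter (3 * n) (morph_word sigma) [:: L2]));
  rewrite /prefix_of E size_mkseq.
Qed.

Lemma size_sigma3 w : (3 * size w <= size (iter 3 (morph_word sigma) w))%N.
Proof.
elim: w => // x w IH.
by rewrite -cat1s iter_morph_word_cat size_cat; move: IH; case: x => /=; lia.
Qed.

Lemma size_sigma3n_2s n : (n < size (sigma3n_2s n))%N.
Proof.
elim: n => // n IH; have := size_sigma3 (sigma3n_2s n).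
by move: IH; rewrite /sigma3n_2s mulnS iterD; lia.
Qed.

Lemma limit_ub : limit_of sigma3n_2s ub.
Proof.
split; first exact: sigma3n_2s_prefix.
by move=> m; exists m; apply/ltnW/size_sigma3n_2s.
Qed.

(** Balance forces at most one right special factor of each length, and
    aperiodicity at least one, so each length has one more factor than the
    previous one. *)

Definition countA (w : seq AB) : nat := count (pred1 A) w.

Definition balanced (s : nat -> AB) : Prop :=
  forall i j n, (countA (factor s i n) <= (countA (factor s j n)).+1)%N.

Definition eventually_periodic (s : nat -> AB) : Prop :=
  exists a p, (0 < p)%N /\ forall k, s (a + k) = s (a + p + k).

Section Sturmian.
Variable s : nat -> AB.
Hypotheses (s_balanced : balanced s) (s_aperiodic : ~ eventually_periodic s).

Definition is_factor (w : seq AB) : bool :=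
  if excluded_middle_informative (exists i, w = factor s i (size w)) then true else false.

Lemma is_factorP w : reflect (exists i, w = factor s i (size w)) (is_factor w).
Proof. by rewrite /is_factor; case: excluded_middle_informative; constructor. Qed.

Lemma is_factor_factor i n : is_factor (factor s i n).
Proof. by apply/is_factorP; exists i; rewrite size_mkseq. Qed.

Lemma is_factor_rcons w c : is_factor (rcons w c) -> is_factor w.
Proof.
case/is_factorP => i; rewrite size_rcons factor_rcons => /rcons_inj [-> _].
exact: is_factor_factor.
Qed.

Lemma is_factor_behead w c : is_factor (c :: w) -> is_factor w.
Proof.
case/is_factorP => i /=; rewrite factor_cons => -[_ ->].
exact: is_factor_factor.
Qed.

Lemma balanced_factors x y : is_factor x -> is_factor y -> size x = size y ->
  (countA x <= (countA y).+1)%N.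
Proof.
case/is_factorP => i ->; case/is_factorP => j ->; rewrite !size_mkseq => <-.
exact: s_balanced.
Qed.

Definition right_special (w : seq AB) : bool :=
  is_factor (rcons w A) && is_factor (rcons w B).

(* Two distinct right special factors of the same length would yield the
   unbalanced pair [A u A], [B u B] for their longest common suffix [u]. *)
Lemma right_special_unique w w' :
  size w = size w' -> right_special w -> right_special w' -> w = w'.
Proof.
elim: w w' => [|a w IH] [|b w'] //= [sz] /andP [wA wB] /andP [w'A w'B].
have e : w = w'.
  by apply: IH => //; apply/andP; split; apply: is_factor_behead;
    [exact: wA | exact: wB | exact: w'A | exact: w'B].
subst w'.
have countA_ext c : countA (rcons (c :: w) c) = (countA w + 2 * (c == A))%N.
  by rewrite /countA /= -cats1 count_cat /=; case: c => /=; lia.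
have size_ext c d : size (rcons (c :: w) c) = size (rcons (d :: w) d).
  by rewrite !size_rcons.
case: a b wA wB w'A w'B => [] [] // wA wB w'A w'B.
  by have := balanced_factors wA w'B (size_ext A B); rewrite !countA_ext /=; lia.
by have := balanced_factors w'A wB (size_ext A B); rewrite !countA_ext /=; lia.
Qed.

(* If no factor of length [n] were right special, each such factor would
   determine the next letter, and a repeated factor would make [s]
   eventually periodic. *)
Lemma right_special_exists n (L : seq (seq AB)) :
  (forall i, factor s i n \in L) -> exists w, size w = n /\ right_special w.
Proof.
move=> all_in_L; apply: NNPP => no_special.
have next_determined i j : factor s i n = factor s j n -> s (i + n) = s (j + n).
  move=> e; apply: NNPP => ne; apply: no_special.
  exists (factor s i n); split; first by rewrite size_mkseq.
  have ext_i : is_factor (rcons (factor s i n) (s (i + n))).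
    by rewrite -factor_rcons is_factor_factor.
  have ext_j : is_factor (rcons (factor s i n) (s (j + n))).
    by rewrite e -factor_rcons is_factor_factor.
  by move: ne ext_i ext_j; rewrite /right_special;
    case: (s (i + n)); case: (s (j + n)) => // _ -> ->.
have [i [j [lt_ij e]]] := pigeonhole all_in_L.
have shifted k : factor s (i + k) n = factor s (j + k) n.
  elim: k => [|k IH]; first by rewrite !addn0.
  have slide m : factor s m.+1 n = behead (factor s m n.+1) by rewrite factor_cons.
  by rewrite !addnS (slide (i + k)) (slide (j + k)) !factor_rcons IH (next_determined _ _ IH).
apply: s_aperiodic; exists (i + n), (j - i); split; first by rewrite subn_gt0.
move=> k; have -> : (i + n + (j - i) + k = j + k + n)%N by lia.
by rewrite addnAC; apply: next_determined.
Qed.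

Fixpoint factors (n : nat) : seq (seq AB) :=
  if n is n'.+1 then
    [seq x <- [seq rcons w c | w <- factors n', c <- [:: A; B]] | is_factor x]
  else [:: [::]].

Lemma factors_mem n w : (w \in factors n) = (size w == n) && is_factor w.
Proof.
elim: n w => [|n IH] w /=.
  rewrite inE; case: w => [|//]; apply/esym/is_factorP.
  by exists 0%N.
rewrite mem_filter; apply/andP/andP => [[w_fac /flatten_mapP [x x_in w_in]]|].
  move: x_in; rewrite IH => /andP [/eqP <- _]; split => //.
  by move: w_in; rewrite !inE => /orP [] /eqP ->; rewrite size_rcons.
case/lastP: w => [|x c] [/eqP sz w_fac] //; split => //.
move: sz; rewrite size_rcons => -[sz].
apply/flatten_mapP; exists x; first by rewrite IH sz eqxx (is_factor_rcons w_fac).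
by case: c {w_fac}; rewrite !inE eqxx ?orbT.
Qed.

Lemma factors_uniq n : uniq (factors n).
Proof.
elim: n => // n IH; apply: filter_uniq.
have : uniq [seq rcons w c | w <- factors n, c <- [:: A; B]].
  by apply: allpairs_uniq => // -[x c] [y d] _ _ /= /rcons_inj [-> ->].
done.
Qed.

(* A factor has one or two extensions, two exactly when it is right special. *)
Lemma factors_size n : size (factors n) = n.+1.
Proof.
elim: n => // n IH.
have extendable x : is_factor x -> is_factor (rcons x A) || is_factor (rcons x B).
  case/is_factorP => i def_x.
  have := is_factor_factor i (size x).+1; rewrite factor_rcons -def_x.
  by case: (s _) => ->; rewrite ?orbT.
have [r [size_r special_r]] : exists r, size r = n /\ right_special r.
  by apply: (@right_special_exists n (factors n)) => i;
    rewrite factors_mem size_mkseq eqxx is_factor_factor.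
rewrite /= size_filter count_flatten -map_comp.
have -> : [seq (count is_factor \o (fun w => [:: rcons w A; rcons w B])) x | x <- factors n]
        = [seq (1 + (x == r))%N | x <- factors n].
  apply/eq_in_map => x; rewrite factors_mem => /andP [/eqP size_x x_fac] /=.
  case: (eqVneq x r) => [->|ne_xr].
    by case/andP: special_r => -> ->.
  have not_special : ~~ right_special x.
    by apply: contra ne_xr => sp; apply/eqP/right_special_unique; rewrite ?size_x.
  by move: (extendable x x_fac) not_special; rewrite /right_special;
    case: (is_factor (rcons x A)); case: (is_factor (rcons x B)).
have sum_ext l : sumn [seq (1 + (x == r))%N | x <- l] = (size l + count_mem r l)%N.
  by elim: l => //= x l ->; rewrite add1n !addSn addnCA.
rewrite sum_ext IH count_uniq_mem ?factors_uniq // factors_mem size_r eqxx.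
by case/andP: special_r => /is_factor_rcons -> _; rewrite addn1.
Qed.

Theorem balanced_aperiodic_sturmian : sturmian s.
Proof.
move=> n; exists (factors n); split; first exact: factors_uniq.
split; first exact: factors_size.
move=> w; rewrite factors_mem; split => [/andP [/eqP sz /is_factorP [i def_w]]|[i ->]].
  by exists i; rewrite def_w sz.
by rewrite size_mkseq eqxx is_factor_factor.
Qed.

End Sturmian.

Lemma countA_factor_v i n : (countA (factor v i n) + F i = F (i + n))%N.
Proof.
elim: n => [|n IH]; first by rewrite addn0.
by rewrite factor_rcons /countA -cats1 count_cat /= -/(countA _) addnS F_succ -IH; lia.
Qed.

Lemma v_balanced : balanced v.
Proof.
move=> i j n; have := countA_factor_v i n; have := countA_factor_v j n.
by have := F_balanced i j n; lia.
Qed.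

Lemma v_aperiodic : ~ eventually_periodic v.
Proof.
move=> [a [p [p_gt0 periodic]]].
have shift m t : v (a + m * p + t) = v (a + t).
  elim: m t => [|m IH] t; first by rewrite mul0n addn0.
  have -> : (a + m.+1 * p + t = a + p + (m * p + t))%N by rewrite mulSnr; lia.
  by rewrite -periodic addnA IH.
apply: (@F_not_affine a p (countA (factor v a p)) p_gt0).
elim=> [|m IH]; first by rewrite !mul0n !addn0.
rewrite mulSnr addnA -countA_factor_v IH.
have -> : factor v (a + m * p) p = factor v a p by apply: eq_mkseq => t; rewrite shift.
by rewrite mulSnr; lia.
Qed.

Lemma v_sturmian : sturmian v.
Proof. exact: balanced_aperiodic_sturmian v_balanced v_aperiodic. Qed.

Section Recurrences.
Local Open Scope R_scope.

Lemma pow_ge_index b m : 2 <= b -> INR m <= b ^ m.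
Proof.
move=> b_ge2; elim: m => [|m IH]; first by rewrite INR_0 pow_O; lra.
have : 1 <= b ^ m by apply: pow_R1_Rle; lra.
by rewrite S_INR /=; nra.
Qed.

(* A bounded orbit of the expanding affine map [x |-> Q x + c] is the fixed
   point: otherwise its distance to the fixed point grows like [Q^m]. *)
Lemma bounded_affine_orbit (D : nat -> R) Q c :
  2 <= Q -> (forall m, D m.+1 = Q * D m + c) -> (forall m, Rabs (D m) < 1) ->
  (Q - 1) * D 0%N + c = 0.
Proof.
move=> Q_ge2 step bounded; set x := (Q - 1) * D 0%N + c.
have orbit m : (Q - 1) * D m + c = Q ^ m * x.
  elim: m => [|m IH]; first by rewrite /x /=; ring.
  have -> : (Q - 1) * D m.+1 + c = Q * ((Q - 1) * D m + c) by rewrite step; ring.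
  by rewrite IH /=; ring.
apply: (@bounded_multiples_zero x ((Q - 1) + Rabs c)) => m.
have Qm_ge : INR m <= Q ^ m by apply: pow_ge_index.
have : Rabs (Q ^ m * x) < (Q - 1) + Rabs c.
  rewrite -orbit; apply: Rle_lt_trans (Rabs_triang _ _) _.
  rewrite Rabs_mult (Rabs_pos_eq (Q - 1)); last lra.
  by have := bounded m; nra.
rewrite !Rabs_mult (Rabs_pos_eq (INR m)) ?(Rabs_pos_eq (Q ^ m)); try exact: pos_INR.
  by have := Rabs_pos x; nra.
by apply: pow_le; lra.
Qed.

Lemma periodic_recurrence_sample (g tau : nat -> R) q k1 p :
  (forall k, g k.+1 = q * g k + tau k) ->
  (forall j, tau (k1 + p + j)%N = tau (k1 + j)%N) ->
  forall m, g (k1 + m.+1 * p)%N =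
            q ^ p * g (k1 + m * p)%N + (g (k1 + p)%N - q ^ p * g k1).
Proof.
move=> rec periodic.
have periodic_m m j : tau (k1 + m * p + j)%N = tau (k1 + j)%N.
  elim: m j => [|m IH] j; first by rewrite mul0n addn0.
  have -> : (k1 + m.+1 * p + j = k1 + p + (m * p + j))%N by rewrite mulSnr; lia.
  by rewrite periodic addnA IH.
have drift m j : g (k1 + m * p + j)%N - q ^ j * g (k1 + m * p)%N =
                 g (k1 + j)%N - q ^ j * g k1.
  elim: j => [|j IH]; first by rewrite !addn0 /=; ring.
  rewrite !addnS !rec periodic_m /=.
  have -> : q * g (k1 + m * p + j)%N + tau (k1 + j)%N - q * q ^ j * g (k1 + m * p)%N =
            q * (g (k1 + m * p + j)%N - q ^ j * g (k1 + m * p)%N) + tau (k1 + j)%N by ring.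
  by rewrite IH; ring.
by move=> m; rewrite mulSnr addnA -(drift m p); ring.
Qed.

Lemma recurrence_frequency (g tau : nat -> R) q alpha k1 p :
  2 <= q -> (0 < p)%N ->
  (forall k, g k.+1 = q * g k + tau k) ->
  (forall j, tau (k1 + p + j)%N = tau (k1 + j)%N) ->
  (forall k, Rabs (g k - q ^ k * alpha) < 1) ->
  (q ^ p - 1) * (q ^ k1 * alpha) = g (k1 + p)%N - g k1.
Proof.
move=> q_ge2 p_gt0 rec periodic close.
have Q_ge2 : 2 <= q ^ p.
  by apply: Rle_trans (_ : q ^ 1 <= q ^ p); [rewrite pow_1 | apply: Rle_pow; [lra | apply/leP]].
have step m : g (k1 + m.+1 * p)%N - q ^ (k1 + m.+1 * p) * alpha =
    q ^ p * (g (k1 + m * p)%N - q ^ (k1 + m * p) * alpha) + (g (k1 + p)%N - q ^ p * g k1).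
  rewrite (periodic_recurrence_sample rec periodic).
  have -> : (k1 + m.+1 * p = p + (k1 + m * p))%N by rewrite mulSnr; lia.
  by rewrite pow_add; ring.
have := bounded_affine_orbit Q_ge2 step (fun m => close (k1 + m * p)%N).
by rewrite mul0n addn0 => fixed; nra.
Qed.

End Recurrences.

(** Let [u = h o w] with [w] a fixed
    point of a [q]-uniform morphism [phi].  The number of positions of a
    letter class [P] in the [n]-th block of length [q^k] of [u] is a function
    [weight k (w n)] of the letter [w n], obeying a linear recurrence in [k].
    If these counts are within bounded distance of [alpha] times the length,
    the deviations of [weight k] from [weight k (w 0)] take finitely many
    values, so they become periodic in [k]: the recurrence for
    [weight k (w 0)] then has periodic forcing and [alpha] is rational. *)

Definition occurrences (T : Type) (P : pred T) (u : nat -> T) (a L : nat) : nat :=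
  count (fun i => P (u i)) (iota a L).


Lemma occurrences_cat (T : Type) (P : pred T) u a L1 L2 :
  occurrences P u a (L1 + L2) = (occurrences P u a L1 + occurrences P u (a + L1) L2)%N.
Proof. by rewrite /occurrences iotaD count_cat. Qed.

Lemma occurrences_blocks (T : Type) (P : pred T) u a L m :
  occurrences P u a (m * L) = sumn (mkseq (fun r => occurrences P u (a + r * L) L) m).
Proof.
elim: m => [|m IH]; first by rewrite mul0n.
by rewrite mulSnr occurrences_cat IH mkseqS sumn_rcons.
Qed.

Section Discrepancy.
Local Open Scope R_scope.

Definition bounded_discrepancy (T : Type) (P : pred T) (u : nat -> T) (alpha : R) : Prop :=
  forall L, Rabs (INR (occurrences P u 0 L) - INR L * alpha) < 1.

End Discrepancy.

Section AutomaticFrequency.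
Local Open Scope R_scope.
Variables (T : Type) (P : pred T) (alpha : R) (q : nat).
Variables (C : finType) (phi : C -> seq C) (h : C -> T) (w : nat -> C).
Hypotheses (q_ge2 : (2 <= q)%N) (phi_uniform : forall c, size (phi c) = q).
Hypothesis w_fixed : fixed_point phi w.
Let u n := h (w n).
Hypothesis discrepancy : bounded_discrepancy P u alpha.

Lemma size_morph_uniform s : size (morph_word phi s) = (q * size s)%N.
Proof.
elim: s => [|x s IH]; first by rewrite muln0.
by rewrite /morph_word /= size_cat phi_uniform -/(morph_word phi s) IH mulnS.
Qed.

Lemma phi_w n : phi (w n) = factor w (q * n)%N q.
Proof.
have := w_fixed n.+1; rewrite /prefix_of size_morph_uniform size_mkseq.
rewrite mkseqS morph_word_rcons mulnS addnC mkseq_add.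
have := w_fixed n; rewrite /prefix_of size_morph_uniform size_mkseq => <-.
by move/(congr1 (drop (q * n)%N)); rewrite !drop_size_cat ?size_morph_uniform ?size_mkseq.
Qed.

(* [weight k c] counts the letters of class [P] in [h (phi^k c)]. *)
Fixpoint weight (k : nat) (c : C) : nat :=
  if k is k'.+1 then sumn (map (weight k') (phi c)) else P (h c).

Lemma weight_w k n : weight k (w n) = occurrences P u (q ^ k * n)%N (q ^ k)%N.
Proof.
elim: k n => [|k IH] n; first by rewrite expn0 mul1n /occurrences /= addn0.
rewrite /= phi_w /factor /mkseq -map_comp expnS occurrences_blocks /mkseq.
by congr sumn; apply: eq_map => r /=; rewrite IH; congr occurrences; nia.
Qed.

(* Counts over two blocks of length [q^k] differ by at most 3, each being a
   difference of two prefix counts. *)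
Lemma weight_close k n :
  (weight k (w n) <= weight k (w 0) + 3)%N /\ (weight k (w 0) <= weight k (w n) + 3)%N.
Proof.
rewrite !weight_w muln0; set a := (q ^ k * n)%N; set L := (q ^ k)%N.
have split_aL := occurrences_cat P u 0 a L; rewrite add0n in split_aL.
have /Rabs_def2 b1 := discrepancy (a + L)%N.
have /Rabs_def2 b2 := discrepancy a; have /Rabs_def2 b3 := discrepancy L.
rewrite split_aL !INR_add in b1.
have INR3 : INR 3 = 3 by rewrite !S_INR INR_0; lra.
by split; rewrite -ltnS; apply: ltn_INR; rewrite S_INR !INR_add INR3; lra.
Qed.

Definition occurs (c : C) : Prop := exists n, w n = c.

Lemma occurs_w0 : occurs (w 0).
Proof. by exists 0%N. Qed.

Lemma occurs_phi c d : occurs c -> d \in phi c -> occurs d.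
Proof. by case=> n <-; rewrite phi_w => /mapP [r _ ->]; exists (q * n + r)%N. Qed.

(* The deviation [weight k c - weight k (w 0)], shifted to be nonnegative. *)
Definition excess (k : nat) (c : C) : nat := (weight k c + 3 - weight k (w 0))%N.

Lemma excess_weight k c : occurs c -> (excess k c + weight k (w 0) = weight k c + 3)%N.
Proof. by case=> n <-; have := weight_close k n; rewrite /excess; lia. Qed.

Lemma excess_le k c : occurs c -> (excess k c <= 6)%N.
Proof. by case=> n <-; have := weight_close k n; rewrite /excess; lia. Qed.

Lemma sum_excess k l : (forall d, d \in l -> occurs d) ->
  (sumn (map (excess k) l) + size l * weight k (w 0) =
   sumn (map (weight k) l) + size l * 3)%N.
Proof.
elim: l => //= d l IH occ_l.
have := excess_weight k (occ_l d (mem_head _ _)).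
have occ_tail x : x \in l -> occurs x by move=> x_l; apply: occ_l; rewrite inE x_l orbT.
have := IH occ_tail.
by rewrite !mulSn; lia.
Qed.

Lemma excess_succ k c : occurs c ->
  (excess k.+1 c + sumn (map (excess k) (phi (w 0))) =
   sumn (map (excess k) (phi c)) + 3)%N.
Proof.
move=> occ_c; have := excess_weight k.+1 occ_c.
have := sum_excess k (fun d => occurs_phi occ_c).
have := sum_excess k (fun d => occurs_phi occurs_w0).
by rewrite !phi_uniform /=; set X := (q * weight k (w 0))%N; lia.
Qed.

(* The excesses of occurring letters lie in [0, 6]: their profile at each
   level is an element of a finite type. *)
Definition profile (k : nat) : {ffun C -> 'I_7} := [ffun c => inord (excess k c)].

Lemma profile_excess k1 k2 c :
  profile k1 = profile k2 -> occurs c -> excess k1 c = excess k2 c.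
Proof.
move=> /(congr1 (fun f : {ffun C -> 'I_7} => nat_of_ord (f c))) e occ_c.
by move: e; rewrite !ffunE !inordK // ltnS excess_le.
Qed.

Lemma profile_shift k1 k2 : profile k1 = profile k2 ->
  forall j c, occurs c -> excess (k1 + j) c = excess (k2 + j) c.
Proof.
move=> e; elim=> [|j IH] c occ_c; first by rewrite !addn0; apply: profile_excess.
have sum_eq d : occurs d -> sumn (map (excess (k1 + j)) (phi d)) =
                            sumn (map (excess (k2 + j)) (phi d)).
  by move=> occ_d; congr sumn; apply/eq_in_map => x x_in; apply/IH/(occurs_phi occ_d).
have := excess_succ (k1 + j) occ_c; have := excess_succ (k2 + j) occ_c.
by rewrite !addnS (sum_eq c occ_c) (sum_eq (w 0) occurs_w0); lia.
Qed.

(* [weight k (w 0)] obeys a linear recurrence whose forcing term only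
   depends on the excess profile at level [k]. *)
Lemma weight_recurrence k :
  INR (weight k.+1 (w 0)) =
  INR q * INR (weight k (w 0)) + (INR (sumn (map (excess k) (phi (w 0)))) - INR (q * 3)).
Proof.
have := sum_excess k (fun d => occurs_phi occurs_w0).
by rewrite phi_uniform => /(congr1 INR); rewrite !INR_add !INR_mul /=; lra.
Qed.

(* Two levels with the same profile make the forcing periodic, and
   [recurrence_frequency] expresses [alpha] through the weights. *)
Lemma automatic_frequency_rational : rational alpha.
Proof.
have [k1 [k2 [lt_k12 e]]] := @pigeonhole _ (enum {ffun C -> 'I_7}) profile
  (fun k => mem_enum _ _).
set p := (k2 - k1)%N.
have k2_eq : (k1 + p)%N = k2 by rewrite subnKC // ltnW.
have p_gt0 : (0 < p)%N by rewrite subn_gt0.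
set forcing := fun k => INR (sumn (map (excess k) (phi (w 0)))) - INR (q * 3).
have periodic j : forcing (k1 + p + j)%N = forcing (k1 + j)%N.
  rewrite /forcing k2_eq; congr (INR _ - _); congr sumn; apply/eq_in_map => d d_in.
  by symmetry; apply: profile_shift => //; apply: (occurs_phi occurs_w0).
have close k : Rabs (INR (weight k (w 0)) - INR q ^ k * alpha) < 1.
  by rewrite weight_w muln0 -INR_exp; apply: discrepancy.
have q_ge2R : 2 <= INR q by rewrite -INR_two; apply: INR_leq.
have := recurrence_frequency q_ge2R p_gt0 weight_recurrence periodic close.
rewrite k2_eq -!INR_exp => freq.
have := ltn_exp2l 0 p q_ge2; rewrite expn0 p_gt0 => qp_gt1.
exists (weight k2 (w 0)), (weight k1 (w 0)), ((q ^ p - 1) * q ^ k1)%N; split.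
  by rewrite muln_gt0 subn_gt0 qp_gt1 expn_gt0 (ltnW q_ge2).
by rewrite INR_mul INR_sub ?(ltnW qp_gt1) // INR_1 -freq; ring.
Qed.

End AutomaticFrequency.

Theorem automatic_bounded_discrepancy_rational (T : Type) (P : pred T) (u : nat -> T)
    (alpha : R) q :
  (2 <= q)%N -> automatic q u -> bounded_discrepancy P u alpha -> rational alpha.
Proof.
move=> q_ge2 [C [phi [h [w [uniform [fixed u_eq]]]]]] discrepancy.
apply: (@automatic_frequency_rational T P alpha q C phi h w q_ge2 uniform fixed) => L.
have -> : occurrences P (fun n => h (w n)) 0 L = occurrences P u 0 L.
  by apply: eq_count => i /=; rewrite u_eq.
exact: discrepancy.
Qed.

(** The letter [2s] has frequency [beta / 2] in [ub], with bounded
    discrepancy: each block [A = 2s 2] contains one [2s] and [B = 1 1s] none,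
    so the prefix of length [2m] contains [countA (v 0 ... v (m-1)) = F m]
    letters [2s]. *)

Lemma occurrences_2s_ub m :
  occurrences (pred1 L2s) ub 0 m.*2 = F m /\
  occurrences (pred1 L2s) ub 0 (m.*2).+1 = F m.+1.
Proof.
have step L : occurrences (pred1 L2s) ub 0 L.+1 =
              (occurrences (pred1 L2s) ub 0 L + (ub L == L2s))%N.
  by rewrite -addn1 occurrences_cat /occurrences /= addn0.
elim: m => [|m [occ_even occ_odd]]; first by rewrite step /ub /v /F; vm_compute.
have occ_even' : occurrences (pred1 L2s) ub 0 (m.+1).*2 = F m.+1.
  rewrite doubleS step occ_odd /ub /= uphalf_double odd_double.
  by case: (v m) => /=; rewrite addn0.
split => //.
by rewrite step occ_even' (F_succ m.+1) /ub odd_double doubleK; case: (v m.+1).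
Qed.

Section Frequency2s.
Local Open Scope R_scope.

Lemma ub_discrepancy : bounded_discrepancy (pred1 L2s) ub (beta / 2).
Proof.
move=> L; have hb := beta_bounds.
have [occ_even occ_odd] := occurrences_2s_ub L./2.
rewrite -[L]odd_double_half; case: (odd L); rewrite ?add0n ?add1n ?occ_odd ?occ_even.
  have [f1 f2] := F_bounds L./2.+1; rewrite S_INR in f1 f2.
  by rewrite S_INR -mul2n INR_mul INR_two; apply: Rabs_def1; lra.
have [f1 f2] := F_bounds L./2.
by rewrite -mul2n INR_mul INR_two; apply: Rabs_def1; lra.
Qed.

End Frequency2s.

Theorem mainTheorem12 :
  (exists w, iter 3 (morph_word sigma) [:: L2s] = L2s :: w) /\
  (exists u, limit_of sigma3n_2s u) /\
  (forall u : nat -> letter, limit_of sigma3n_2s u ->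
     (forall q, 2 <= q -> ~ automatic q u) /\
     (exists v : nat -> AB, block_concat u v /\ fixed_point tau v /\ sturmian v)).
Proof.
split; first by exists [:: L2; L1; L1s; L2s].
split; first by exists ub; exact: limit_ub.
move=> u u_lim; have u_ub := limit_unique u_lim limit_ub.
split.
  move=> q q_ge2 u_auto; apply: half_beta_irrational.
  apply: (automatic_bounded_discrepancy_rational q_ge2 u_auto (P := pred1 L2s)) => L.
  have -> : occurrences (pred1 L2s) u 0 L = occurrences (pred1 L2s) ub 0 L.
    by apply: eq_count => i; rewrite /= u_ub.
  exact: ub_discrepancy.
exists v; split; last by split; [exact: v_fixed_point | exact: v_sturmian].
move=> n; rewrite /prefix_of block_image_prefix size_mkseq.
by apply: eq_mkseq => i; rewrite u_ub.
Qed.
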